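(* Let $\mathbf{D}=[\mathbf{B}\ \mathbf{A}]\mathbf{T}\in\mathbb{R}^{M_1\times M_2}$ follow Data Model 1 (context), with unit $\ell_2$-norm columns. Let $\mathbf{d}$ be one of the columns of $\mathbf{B}$, let $\hat{\mathbf{c}}$ be the optimal point of $$\min_{\mathbf{c}}\|\mathbf{c}^T\mathbf{D}\|_1\ \text{ s.t. }\ \mathbf{c}^T\mathbf{d}=1,\ \mathbf{c}\in\mathcal{U}^\perp,$$ let $\mathcal{I}_0=\{i\in[M_2]:\hat{\mathbf{c}}^T\mathbf{d}_i=0,\ \mathbf{d}_i\text{ a column of }\mathbf{B}\}$, $\mathbf{d}^\perp=(\mathbf{I}-\mathbf{U}\mathbf{U}^T)\mathbf{d}/\|(\mathbf{I}-\mathbf{U}\mathbf{U}^T)\mathbf{d}\|_2$, and $\mathbf{o}=\sum_{\mathbf{d}_i\in\mathbf{B}}\mathrm{sgn}(\hat{\mathbf{c}}^T\mathbf{d}_i)\,\mathbf{d}_i$. If $$\frac12\inf_{\boldsymbol\delta\in\mathcal{U},\|\boldsymbol\delta\|_2=1}\sum_{\mathbf{d}_i\in\mathbf{A}}|\boldsymbol\delta^T\mathbf{d}_i|>\sup_{\boldsymbol\delta\in\mathcal{U},\|\boldsymbol\delta\|=1}\sum_{\mathbf{d}_i\in\mathbf{B},\,i\in\mathcal{I}_0}|\boldsymbol\delta^T\mathbf{d}_i|+\|\mathbf{U}^T\mathbf{o}\|_2$$ and $$\inf_{\boldsymbol\delta\in\mathcal{U},\|\boldsymbol\delta\|_2=1}\sum_{\mathbf{d}_i\in\mathbf{A}}|\boldsymbol\delta^T\mathbf{d}_i|>\frac{2\|\mathbf{d}^T\mathbf{U}\|_2}{\sqrt{1-\|\mathbf{d}^T\mathbf{U}\|_2^2}}\Big(\mathbf{o}^T\mathbf{d}^\perp+\sum_{\mathbf{d}_i\in\mathbf{B},\,i\in\mathcal{I}_0}|\mathbf{d}_i^T\mathbf{d}^\perp|\Big),$$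 then $$\arg\min_{\mathbf{c}\in\mathcal{U}^\perp,\ \mathbf{d}^T\mathbf{c}=1}\|\mathbf{c}^T\mathbf{D}\|_1=\arg\min_{\mathbf{d}^T\mathbf{c}=1}\|\mathbf{c}^T\mathbf{D}\|_1 .$$
   Context: Data Model 1: $\mathbf{D}=[\mathbf{B}\ \mathbf{A}]\mathbf{T}$, where $\mathbf{T}$ is a permutation matrix, $\mathbf{A}\in\mathbb{R}^{M_1\times n_i}$ has columns (inliers) lying in an $r$-dimensional subspace $\mathcal{U}$ with orthonormal basis $\mathbf{U}\in\mathbb{R}^{M_1\times r}$, and $\mathbf{B}\in\mathbb{R}^{M_1\times n_o}$ has columns (outliers) not lying in $\mathcal{U}$. The columns of $\mathbf{D}$ are $\mathbf{d}_1,\dots,\mathbf{d}_{M_2}$; ''$\mathbf{d}_i\in\mathbf{A}$'' (''$\in\mathbf{B}$'') means $\mathbf{d}_i$ is a column of $\mathbf{A}$ (of $\mathbf{B}$). $\mathcal{U}^\perp$ is the orthogonal complement of $\mathcal{U}$. *)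

From HB Require Import structures.
From mathcomp Require Import all_boot all_order all_algebra.
From mathcomp Require Import boolp classical_sets reals.
Set Implicit Arguments. Unset Strict Implicit. Unset Printing Implicit Defensive.
Import Order.TTheory GRing.Theory Num.Theory.
Local Open Scope ring_scope.
Local Open Scope classical_set_scope.

Section Defs.
Variable R : realType.

Definition dotv n (u v : 'cV[R]_n) : R := \sum_(i < n) u i 0 * v i 0.

Definition norm2 n (v : 'cV[R]_n) : R := Num.sqrt (dotv v v).

Definition l1obj m n (D : 'M[R]_(m, n)) (c : 'cV[R]_m) : R :=
  \sum_(j < n) `| dotv c (col j D) |.

Definition inSub m r (U : 'M[R]_(m, r)) (v : 'cV[R]_m) : Prop :=
  exists x : 'cV[R]_r, v = U *m x.

Definition inPerp m r (U : 'M[R]_(m, r)) (c : 'cV[R]_m) : Prop :=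
  U^T *m c = 0.

Definition subSphere m r (U : 'M[R]_(m, r)) : set 'cV[R]_m :=
  [set δ | inSub U δ /\ norm2 δ = 1].

Definition argmin (T : Type) (S : set T) (f : T -> R) : set T :=
  [set x | S x /\ forall y, S y -> f x <= f y].

(* Data Model 1: D = [B A] T.  The permutation T is encoded by the index set
   IA of the columns of D that are columns of A (inliers); the remaining
   columns are those of B (outliers). *)
Definition DataModel1 m n r (D : 'M[R]_(m, n)) (U : 'M[R]_(m, r))
    (IA : {set 'I_n}) : Prop :=
  [/\ U^T *m U = 1%:M,
      (forall i, i \in IA -> inSub U (col i D)) &
      (forall i, i \notin IA -> ~ inSub U (col i D))].

End Defs.

From HB Require Import structures.
From mathcomp Require Import all_boot all_order all_algebra.
From mathcomp Require Import boolp classical_sets reals.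
From mathcomp Require Import ring lra.
Import Order.TTheory GRing.Theory Num.Theory.
Local Open Scope ring_scope.
Local Open Scope classical_set_scope.
Set Implicit Arguments. Unset Strict Implicit.

(* The restricted minimiser c is a sharp minimiser of the unrestricted problem
   in the directions leaving the orthogonal complement of the inlier subspace:
   for every y with d^T y = 1,
     ||y^T D||_1 >= ||c^T D||_1 + kappa ||U^T y||_2,
   kappa = inf_A - sup_{I0} - ||U^T o|| - ||U^T d|| ||c^T D||_1.
   By convexity ||y^T D||_1 - ||c^T D||_1 is at least the one-sided directional
   derivative of the l1 objective at c along h = y - c.  As c is orthogonal to
   the inliers, that derivative splits into an inlier part, at least
   ||U^T h|| inf_A, and an outlier part.  Writing h = h_perp + U U^T h, the
   U-component costs at most ||U^T h|| (sup_{I0} + ||U^T o||), and optimality of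
   c over the complement bounds the h_perp-part below by
   -|d^T h_perp| ||c^T D||_1 >= -||U^T d|| ||U^T h|| ||c^T D||_1.  Testing the
   same optimality on the direction d_perp gives
   ||c^T D||_1 sqrt(1 - ||U^T d||^2) <= o^T d_perp + sum_{I0} |d_i^T d_perp|,
   so the two hypotheses make kappa positive, and every unrestricted minimiser
   satisfies U^T y = 0. *)

Section InnerProduct.
Variables (R : realType) (n : nat).
Implicit Types (u v w : 'cV[R]_n).

Lemma dotvC u v : dotv u v = dotv v u.
Proof. by apply: eq_bigr => i _; rewrite mulrC. Qed.

Lemma dotvDl u v w : dotv (u + v) w = dotv u w + dotv v w.
Proof. by rewrite /dotv -big_split; apply: eq_bigr => i _; rewrite !mxE mulrDl. Qed.

Lemma dotvZl a u w : dotv (a *: u) w = a * dotv u w.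
Proof. by rewrite /dotv mulr_sumr; apply: eq_bigr => i _; rewrite !mxE mulrA. Qed.

Lemma dotvNl u w : dotv (- u) w = - dotv u w.
Proof. by rewrite -scaleN1r dotvZl mulN1r. Qed.

Lemma dotvBl u v w : dotv (u - v) w = dotv u w - dotv v w.
Proof. by rewrite dotvDl dotvNl. Qed.

Lemma dotvDr u v w : dotv w (u + v) = dotv w u + dotv w v.
Proof. by rewrite dotvC dotvDl !(dotvC w). Qed.

Lemma dotvZr a u w : dotv w (a *: u) = a * dotv w u.
Proof. by rewrite dotvC dotvZl dotvC. Qed.

Lemma dotvBr u v w : dotv w (u - v) = dotv w u - dotv w v.
Proof. by rewrite !(dotvC w) dotvBl. Qed.

Lemma dotv0l w : dotv 0 w = 0.
Proof. by rewrite -(scale0r 0) dotvZl mul0r. Qed.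

Lemma dotv0r w : dotv w 0 = 0.
Proof. by rewrite dotvC dotv0l. Qed.

Lemma dotv_sumr (I : finType) (P : pred I) (F : I -> 'cV[R]_n) w :
  dotv w (\sum_(i | P i) F i) = \sum_(i | P i) dotv w (F i).
Proof.
apply: (big_ind2 (fun a b => dotv w a = b)) => //; first exact: dotv0r.
by move=> ? ? ? ? <- <-; rewrite dotvDr.
Qed.

Lemma dotvv_ge0 v : 0 <= dotv v v.
Proof. by apply: sumr_ge0 => i _; rewrite -expr2 sqr_ge0. Qed.

Lemma dotvv_eq0 v : dotv v v = 0 -> v = 0.
Proof.
move=> /eqP; rewrite psumr_eq0 => [/allP v0|i _]; last by rewrite -expr2 sqr_ge0.
apply/matrixP => i j; rewrite ord1 mxE.
by move: (v0 i (mem_index_enum i)); rewrite implyTb mulf_eq0 orbb => /eqP.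
Qed.

Lemma norm2_ge0 v : 0 <= norm2 v.
Proof. exact: sqrtr_ge0. Qed.

Lemma sqr_norm2 v : norm2 v ^+ 2 = dotv v v.
Proof. by rewrite sqr_sqrtr // dotvv_ge0. Qed.

Lemma norm2_eq0 v : norm2 v = 0 -> v = 0.
Proof. by move=> v0; apply: dotvv_eq0; rewrite -sqr_norm2 v0 expr0n. Qed.

Lemma norm2Z a v : 0 <= a -> norm2 (a *: v) = a * norm2 v.
Proof.
by move=> a0; rewrite /norm2 dotvZl dotvZr mulrA sqrtrM ?mulr_ge0 // sqrtr_sqr ger0_norm.
Qed.

(* Cauchy-Schwarz: the squared norm of [|v|^2 u - <u,v> v] is
   [|v|^2 (|v|^2 |u|^2 - <u,v>^2)]. *)
Lemma normr_dotv_le u v : `|dotv u v| <= norm2 u * norm2 v.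
Proof.
rewrite -sqrtr_sqr /norm2 -sqrtrM ?dotvv_ge0 // ler_sqrt ?mulr_ge0 ?dotvv_ge0 //.
have [v0|v_neq0] := eqVneq (dotv v v) 0.
  by rewrite v0 mulr0 (dotvv_eq0 v0) dotv0r expr0n.
have v_pos : 0 < dotv v v by rewrite lt_def v_neq0 dotvv_ge0.
have := dotvv_ge0 (dotv v v *: u - dotv u v *: v).
rewrite !(dotvBl, dotvBr, dotvZl, dotvZr) (dotvC v u).
set a := dotv v v; set b := dotv u v; set c := dotv u u.
have -> : a * (a * c - b * b) - b * (a * b - b * a) = a * (c * a - b ^+ 2) by ring.
by rewrite pmulr_rge0 // subr_ge0.
Qed.

End InnerProduct.

Lemma dotv_mulmx (R : realType) m n (A : 'M[R]_(m, n)) u v :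
  dotv u (A *m v) = dotv (A^T *m u) v.
Proof.
suff dotvE k (x y : 'cV[R]_k) : dotv x y = (x^T *m y) 0 0.
  by rewrite !dotvE trmx_mul trmxK mulmxA.
by rewrite /dotv !mxE; apply: eq_bigr => i _; rewrite !mxE.
Qed.

Section NormDirectional.
Variable R : realFieldType.

(* The one-sided derivative of [`|.|] at [a] in the direction [b]. *)
Definition normr_dir (a b : R) : R := Num.sg a * b + (a == 0)%:R * `|b|.

Lemma normrD_ge_dir (a b : R) : `|a| + normr_dir a b <= `|a + b|.
Proof.
rewrite /normr_dir; case: (ltrgtP a 0) => [a_lt0|a_gt0|->].
- by rewrite ltr0_sg // ltr0_norm // mul0r addr0 mulN1r -opprD ler_normr lexx orbT.
- by rewrite gtr0_sg // gtr0_norm // mul0r addr0 mul1r ler_normr lexx.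
- by rewrite sgr0 normr0 mul0r mul1r !add0r.
Qed.

Lemma normrD_dir (a b e : R) : 0 <= e -> (a != 0 -> e * `|b| <= `|a|) ->
  `|a + e * b| = `|a| + e * normr_dir a b.
Proof.
move=> e_ge0 small; rewrite /normr_dir.
have [a0|a_neq0] := eqVneq a 0.
  by rewrite a0 sgr0 normr0 mul0r mul1r !add0r normrM ger0_norm.
move: (small a_neq0); rewrite mulr0n mul0r addr0.
have /andP[eb_ge eb_le] : - (e * `|b|) <= e * b <= e * `|b|.
  by rewrite -ler_norml normrM ger0_norm.
case: (ltrgtP a 0) a_neq0 => [a_lt0|a_gt0|->] // _.
- rewrite ltr0_sg // mulN1r (ltr0_norm a_lt0) => small'.
  by rewrite ler0_norm; lra.
- rewrite gtr0_sg // mul1r (gtr0_norm a_gt0) => small'.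
  by rewrite ger0_norm; lra.
Qed.

Lemma exists_step_le (I : finType) (a b : I -> R) :
  exists2 e : R, 0 < e & forall i, a i != 0 -> e * `|b i| <= `|a i|.
Proof.
pose S := \sum_(i | a i != 0) `|b i| / `|a i|.
have S_ge0 : 0 <= S by apply: sumr_ge0 => i _; rewrite divr_ge0.
exists (1 + S)^-1 => [|i ai_neq0]; first by rewrite invr_gt0; lra.
have ai_gt0 : 0 < `|a i| by rewrite normr_gt0.
have : `|b i| / `|a i| <= S.
  by rewrite /S (bigD1 i) //= lerDl; apply: sumr_ge0 => j _; rewrite divr_ge0.
rewrite ler_pdivrMr // => le_S.
rewrite mulrC ler_pdivrMr; last by lra.
by apply: (le_trans le_S); rewrite [X in _ <= X]mulrC ler_pM2r //; lra.
Qed.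

End NormDirectional.

Lemma argmin_eq_sharp (R : realType) (T : Type) (S P : set T) (f g : T -> R) x kappa :
  S `<=` P -> S x -> 0 < kappa -> (forall y, 0 <= g y) ->
  (forall y, P y -> g y = 0 -> S y) ->
  (forall y, P y -> f x + kappa * g y <= f y) ->
  argmin S f = argmin P f.
Proof.
move=> SP Sx kappa_gt0 g_ge0 g0_S growth.
have x_min y : P y -> f x <= f y.
  by move=> Py; apply: le_trans (growth y Py); rewrite lerDl pmulr_rge0.
apply/seteqP; split=> y [Sy y_min].
  by split=> [|z Pz]; [exact: SP _ Sy | exact: le_trans (y_min x Sx) (x_min z Pz)].
have gy0 : g y = 0.
  apply/eqP; rewrite eq_le g_ge0 andbT -(pmulr_rle0 _ kappa_gt0).
  by have := growth y Sy; have := y_min x (SP _ Sx); lra.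
by split=> [|z Sz]; [exact: g0_S | exact: y_min z (SP _ Sz)].
Qed.

Section L1Directional.
Variables (R : realType) (m n : nat) (D : 'M[R]_(m, n)).
Implicit Types (c h : 'cV[R]_m).

Definition l1obj_dir c h : R :=
  \sum_(j < n) normr_dir (dotv c (col j D)) (dotv h (col j D)).

Lemma l1obj_subgrad c h : l1obj D c + l1obj_dir c h <= l1obj D (c + h).
Proof. by rewrite -big_split; apply: ler_sum => j _; rewrite dotvDl normrD_ge_dir. Qed.

Lemma l1obj_dir_step c h :
  exists2 e : R, 0 < e & l1obj D (c + e *: h) = l1obj D c + e * l1obj_dir c h.
Proof.
have [e e_gt0 small] :=
  exists_step_le (fun j => dotv c (col j D)) (fun j => dotv h (col j D)).
exists e => //; rewrite mulr_sumr -big_split; apply: eq_bigr => j _.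
by rewrite dotvDl dotvZl normrD_dir //; [apply: ltW | apply: small].
Qed.

Lemma l1obj_dir_ge0 (S : set 'cV[R]_m) c h : argmin S (l1obj D) c ->
  (forall e, 0 < e -> S (c + e *: h)) -> 0 <= l1obj_dir c h.
Proof.
move=> [_ c_min] S_step; have [e e_gt0 step] := l1obj_dir_step c h.
by move: (c_min _ (S_step e e_gt0)); rewrite step lerDl pmulr_rge0.
Qed.

End L1Directional.

Section OrthonormalBasis.
Variables (R : realType) (m r : nat) (U : 'M[R]_(m, r)).
Hypothesis U_orth : U^T *m U = 1%:M.

Local Notation proj := (1%:M - U *m U^T).

Lemma inSub_dotv_perp v w : inSub U v -> inPerp U w -> dotv w v = 0.
Proof. by move=> [x ->] w_perp; rewrite dotv_mulmx w_perp dotv0l. Qed.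

Lemma norm2_orth x : norm2 (U *m x) = norm2 x.
Proof. by rewrite /norm2 dotv_mulmx mulmxA U_orth mul1mx. Qed.

Lemma subSphere_normalize x : 0 < norm2 x -> subSphere U (U *m ((norm2 x)^-1 *: x)).
Proof.
move=> x_gt0; split; first by exists ((norm2 x)^-1 *: x).
by rewrite norm2_orth norm2Z ?invr_ge0 ?norm2_ge0 // mulVf ?gt_eqF.
Qed.

Lemma inPerp_proj v : inPerp U (proj *m v).
Proof. by rewrite /inPerp mulmxA mulmxBr mulmx1 mulmxA U_orth mul1mx subrr mul0mx. Qed.

Lemma dotv_proj v : dotv v (proj *m v) = norm2 (proj *m v) ^+ 2.
Proof.
rewrite sqr_norm2 {2}mulmxBl mul1mx dotvBl -mulmxA (dotvC (U *m _)) dotv_mulmx.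
by rewrite (inPerp_proj v) dotv0l subr0.
Qed.

Lemma norm2_proj v :
  norm2 (proj *m v) = Num.sqrt (norm2 v ^+ 2 - norm2 (U^T *m v) ^+ 2).
Proof.
rewrite [LHS]/norm2 -sqr_norm2 -dotv_proj.
by rewrite mulmxBl mul1mx dotvBr -mulmxA dotv_mulmx !sqr_norm2.
Qed.

Lemma dotv_normalized_proj v :
  dotv v ((norm2 (proj *m v))^-1 *: (proj *m v)) = norm2 (proj *m v).
Proof.
rewrite dotvZr dotv_proj; set a := norm2 _.
by have [->|a_neq0] := eqVneq a 0; rewrite ?expr0n ?mulr0 // expr2 mulKf.
Qed.

Lemma inPerp_normalized_proj v : inPerp U ((norm2 (proj *m v))^-1 *: (proj *m v)).
Proof. by rewrite /inPerp -scalemxAr (inPerp_proj v) scaler0. Qed.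

Lemma norm2_proj_gt0 v : ~ inSub U v -> 0 < norm2 (proj *m v).
Proof.
move=> v_out; rewrite lt_def norm2_ge0 andbT; apply/eqP => /norm2_eq0 /eqP.
by rewrite mulmxBl mul1mx subr_eq0 -mulmxA => /eqP v_in; apply: v_out; exists (U^T *m v).
Qed.

Section SphereExtrema.
Variable g : 'cV[R]_m -> R.
Hypothesis g_homog : forall s v, 0 <= s -> g (s *: v) = s * g v.

Let g_scale x : 0 < norm2 x -> g (U *m x) = norm2 x * g (U *m ((norm2 x)^-1 *: x)).
Proof.
by move=> x_gt0; rewrite -scalemxAr g_homog ?invr_ge0 ?ltW // mulrA divff ?gt_eqF ?mul1r.
Qed.

Let g_at0 x : norm2 x = 0 -> g (U *m x) = 0.
Proof. by move=> /norm2_eq0 ->; rewrite mulmx0 -(scale0r 0) g_homog // mul0r. Qed.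

Lemma inf_sphere_le x : (forall v, 0 <= g v) ->
  norm2 x * inf (g @` subSphere U) <= g (U *m x).
Proof.
move=> g_ge0; have [x0|x_neq0] := eqVneq (norm2 x) 0; first by rewrite x0 mul0r g_at0.
have x_gt0 : 0 < norm2 x by rewrite lt_def x_neq0 norm2_ge0.
rewrite g_scale // ler_pM2l //; apply: ge_inf; first by exists 0 => _ [v _ <-].
by exists (U *m ((norm2 x)^-1 *: x)) => //; apply: subSphere_normalize.
Qed.

Lemma le_sup_sphere x : has_ubound (g @` subSphere U) ->
  g (U *m x) <= norm2 x * sup (g @` subSphere U).
Proof.
move=> g_ub; have [x0|x_neq0] := eqVneq (norm2 x) 0; first by rewrite x0 mul0r g_at0.
have x_gt0 : 0 < norm2 x by rewrite lt_def x_neq0 norm2_ge0.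
rewrite g_scale // ler_pM2l //; apply: ub_le_sup => //.
by exists (U *m ((norm2 x)^-1 *: x)) => //; apply: subSphere_normalize.
Qed.

End SphereExtrema.
End OrthonormalBasis.

Section SumAbsDotv.
Variables (R : realType) (m n : nat) (D : 'M[R]_(m, n)) (A : {set 'I_n}).

Definition sum_abs_dotv (v : 'cV[R]_m) : R := \sum_(i in A) `|dotv v (col i D)|.

Lemma sum_abs_dotv_ge0 v : 0 <= sum_abs_dotv v.
Proof. exact: sumr_ge0. Qed.

Lemma sum_abs_dotvZ s v : 0 <= s -> sum_abs_dotv (s *: v) = s * sum_abs_dotv v.
Proof.
by move=> s_ge0; rewrite mulr_sumr; apply: eq_bigr => i _; rewrite dotvZl normrM ger0_norm.
Qed.

Lemma sum_abs_dotvD_ge u v : sum_abs_dotv u - sum_abs_dotv v <= sum_abs_dotv (u + v).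
Proof. by rewrite -sumrB; apply: ler_sum => i _; rewrite dotvDl lerB_normD. Qed.

Lemma has_ubound_sum_abs_dotv r (U : 'M[R]_(m, r)) :
  (forall i, norm2 (col i D) = 1) -> has_ubound (sum_abs_dotv @` subSphere U).
Proof.
move=> unit_col; exists #|A|%:R => _ [v [_ v1] <-]; rewrite -sumr_const.
by apply: ler_sum => i _; apply: le_trans (normr_dotv_le _ _) _; rewrite v1 unit_col mulr1.
Qed.

End SumAbsDotv.

Section OutlierDirectional.
Variables (R : realType) (m n : nat) (D : 'M[R]_(m, n)) (IA : {set 'I_n}) (c : 'cV[R]_m).

Definition zero_outliers : {set 'I_n} :=
  [set i | (i \notin IA) && (dotv c (col i D) == 0)].

Definition outlier_sign_sum : 'cV[R]_m :=
  \sum_(i < n | i \notin IA) Num.sg (dotv c (col i D)) *: col i D.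

Definition outlier_dir (h : 'cV[R]_m) : R :=
  dotv h outlier_sign_sum + sum_abs_dotv D zero_outliers h.

Hypothesis c_inliers0 : forall j, j \in IA -> dotv c (col j D) = 0.

Lemma l1obj_dir_split h : l1obj_dir D c h = outlier_dir h + sum_abs_dotv D IA h.
Proof.
rewrite /outlier_dir /sum_abs_dotv dotv_sumr (big_mkcond (fun i => i \notin IA)).
rewrite (big_mkcond (mem zero_outliers)) (big_mkcond (mem IA)) -!big_split /=.
apply: eq_bigr => j _; rewrite inE /normr_dir; case: (boolP (j \in IA)) => [jA|_] /=.
  by rewrite c_inliers0 // sgr0 mul0r eqxx mul1r !add0r.
by rewrite dotvZr addr0; case: eqP => _ /=; rewrite ?mul1r ?mul0r.
Qed.

Lemma dotv_outlier_sign_sum : dotv c outlier_sign_sum = l1obj D c.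
Proof.
rewrite dotv_sumr /l1obj (big_mkcond (fun i => i \notin IA)) /=; apply: eq_bigr => j _.
case: ifPn => [_|/negPn jA]; last by rewrite c_inliers0 // normr0.
by rewrite dotvZr -normrEsg.
Qed.

Lemma outlier_dirD_ge u v :
  outlier_dir u + dotv v outlier_sign_sum - sum_abs_dotv D zero_outliers v
  <= outlier_dir (u + v).
Proof.
have := sum_abs_dotvD_ge D zero_outliers u v.
by rewrite /outlier_dir dotvDl; lra.
Qed.

Lemma outlier_dir_shift h t : outlier_dir (h - t *: c) = outlier_dir h - t * l1obj D c.
Proof.
rewrite /outlier_dir dotvBl dotvZl dotv_outlier_sign_sum -addrA addrAC addrA.
congr (_ + _); apply: eq_bigr => i; rewrite inE => /andP[_ /eqP ci0].
by rewrite dotvBl dotvZl ci0 mulr0 subr0.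
Qed.

End OutlierDirectional.

Section SharpMinimum.
Variables (R : realType) (m n r : nat) (D : 'M[R]_(m, n)) (U : 'M[R]_(m, r)).
Variables (IA : {set 'I_n}) (d c : 'cV[R]_m).
Hypotheses (U_orth : U^T *m U = 1%:M)
  (inliers_in : forall i, i \in IA -> inSub U (col i D))
  (unit_cols : forall i, norm2 (col i D) = 1)
  (c_opt : argmin [set c | inPerp U c /\ dotv c d = 1] (l1obj D) c).

Local Notation o := (outlier_sign_sum D IA c).
Local Notation phi := (outlier_dir D IA c).
Local Notation kappa :=
  (inf (sum_abs_dotv D IA @` subSphere U)
   - sup (sum_abs_dotv D (zero_outliers D IA c) @` subSphere U)
   - norm2 (U^T *m o) - norm2 (U^T *m d) * l1obj D c).

Let c_perp : inPerp U c. Proof. by case: c_opt => [[]]. Qed.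

Let sum_abs_inliers_perp w : inPerp U w -> sum_abs_dotv D IA w = 0.
Proof. by move=> w_perp; apply: big1 => i iA; rewrite (inSub_dotv_perp (inliers_in iA)) ?normr0. Qed.

Let c_inliers0 j : j \in IA -> dotv c (col j D) = 0.
Proof. by move=> jA; rewrite (inSub_dotv_perp (inliers_in jA)). Qed.

(* Optimality of [c] along the feasible direction [w - <d,w> c] of the
   constrained problem. *)
Lemma outlier_dir_ge w : inPerp U w -> dotv d w * l1obj D c <= phi w.
Proof.
move=> w_perp; set t := dotv d w; set w' := w - t *: c.
have w'_perp : inPerp U w'.
  by rewrite /inPerp mulmxBr -scalemxAr w_perp c_perp scaler0 subr0.
have dir_w' : l1obj_dir D c w' = phi w'.
  by rewrite (l1obj_dir_split c_inliers0) sum_abs_inliers_perp // addr0.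
rewrite -subr_ge0 -outlier_dir_shift // -dir_w'.
apply: (l1obj_dir_ge0 c_opt) => e e_gt0; split.
  by rewrite /inPerp mulmxDr -scalemxAr c_perp w'_perp scaler0 addr0.
rewrite dotvDl dotvZl c_opt.1.2 (dotvC w') dotvBr dotvZr (dotvC d c) c_opt.1.2.
by rewrite mulr1 subrr mulr0 addr0.
Qed.

Lemma l1obj_dir_lower h : dotv d h = 0 -> kappa * norm2 (U^T *m h) <= l1obj_dir D c h.
Proof.
move=> dh0; set x := U^T *m h; set hp := h - U *m x.
have hp_perp : inPerp U hp by rewrite /inPerp mulmxBr mulmxA U_orth mul1mx subrr.
have hE : h = hp + U *m x by rewrite subrK.
have inliers_eq : sum_abs_dotv D IA h = sum_abs_dotv D IA (U *m x).
  rewrite {1}hE; apply: eq_bigr => i iA.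
  by rewrite dotvDl (inSub_dotv_perp (inliers_in iA) hp_perp) add0r.
have inliers_ge := inf_sphere_le U_orth (sum_abs_dotvZ D IA) x (sum_abs_dotv_ge0 D IA).
have zeros_le := le_sup_sphere U_orth (sum_abs_dotvZ D (zero_outliers D IA c)) x
  (has_ubound_sum_abs_dotv _ U unit_cols).
have o_ge : - (norm2 x * norm2 (U^T *m o)) <= dotv (U *m x) o.
  have := normr_dotv_le (U^T *m o) x; rewrite -dotv_mulmx dotvC ler_norml.
  by move=> /andP[+ _]; rewrite mulrC.
have hp_ge : - (norm2 (U^T *m d) * norm2 x * l1obj D c) <= phi hp.
  apply: le_trans (outlier_dir_ge hp_perp); rewrite -mulNr ler_wpM2r //.
    exact: sumr_ge0.
  have := normr_dotv_le (U^T *m d) x; rewrite -dotv_mulmx ler_norml.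
  by rewrite /hp dotvBr dh0 sub0r lerN2 => /andP[].
have := outlier_dirD_ge D IA c hp (U *m x); rewrite -hE.
rewrite (l1obj_dir_split c_inliers0) inliers_eq mulrC.
set iA := inf _ in inliers_ge *; set sZ := sup _ in zeros_le *.
have -> : norm2 x * (iA - sZ - norm2 (U^T *m o) - norm2 (U^T *m d) * l1obj D c)
  = norm2 x * iA - norm2 x * sZ - norm2 x * norm2 (U^T *m o)
    - norm2 (U^T *m d) * norm2 x * l1obj D c by ring.
lra.
Qed.

Lemma l1obj_growth y : dotv d y = 1 -> l1obj D c + kappa * norm2 (U^T *m y) <= l1obj D y.
Proof.
move=> dy1; have := l1obj_subgrad D c (y - c); rewrite [c + _]addrC subrK; apply: le_trans.
have -> : U^T *m y = U^T *m (y - c) by rewrite mulmxBr c_perp subr0.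
by rewrite lerD2l l1obj_dir_lower // dotvBr dy1 dotvC c_opt.1.2 subrr.
Qed.

End SharpMinimum.

Theorem lemma9 (R : realType) (M1 M2 r : nat) (D : 'M[R]_(M1, M2))
  (U : 'M[R]_(M1, r)) (IA : {set 'I_M2}) (k : 'I_M2) (ch : 'cV[R]_M1) :
  DataModel1 D U IA ->
  (forall i : 'I_M2, norm2 (col i D) = 1) ->
  k \notin IA ->
  let d := col k D in
  argmin [set c | inPerp U c /\ dotv c d = 1] (l1obj D) ch ->
  let I0 := [set i : 'I_M2 | (i \notin IA) && (dotv ch (col i D) == 0)]%SET in
  let dperp := (norm2 ((1%:M - U *m U^T) *m d))^-1 *: ((1%:M - U *m U^T) *m d) in
  let o := \sum_(i < M2 | i \notin IA) Num.sg (dotv ch (col i D)) *: col i D in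
  let infA := inf [set (\sum_(i in IA) `|dotv δ (col i D)|) | δ in subSphere U] in
  let supB := sup [set (\sum_(i in I0) `|dotv δ (col i D)|) | δ in subSphere U] in
  infA / 2 > supB + norm2 (U^T *m o) ->
  infA > 2 * norm2 (U^T *m d) / Num.sqrt (1 - norm2 (U^T *m d) ^+ 2)
           * (dotv o dperp + \sum_(i in I0) `|dotv (col i D) dperp|) ->
  argmin [set c | inPerp U c /\ dotv d c = 1] (l1obj D)
  = argmin [set c | dotv d c = 1] (l1obj D).
Proof.
move=> [U_orth inliers_in outliers_out] unit_cols k_out d ch_opt I0 dperp o infA supB.
set nd := norm2 (U^T *m d); set p := (1%:M - U *m U^T) *m d => sup_lt angle_lt.
have p_gt0 : 0 < norm2 p := norm2_proj_gt0 (outliers_out k k_out).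
have ch_le : norm2 p * l1obj D ch <= dotv o dperp + \sum_(i in I0) `|dotv (col i D) dperp|.
  rewrite (dotvC o); under eq_bigr do rewrite dotvC.
  have := outlier_dir_ge inliers_in ch_opt (inPerp_normalized_proj U_orth d).
  by rewrite (dotv_normalized_proj U_orth).
have kappa_gt0 : 0 < infA - supB - norm2 (U^T *m o) - nd * l1obj D ch.
  have : 2 * (nd * l1obj D ch)
         <= 2 * nd / Num.sqrt (1 - nd ^+ 2) * (dotv o dperp + \sum_(i in I0) `|dotv (col i D) dperp|).
    have -> : Num.sqrt (1 - nd ^+ 2) = norm2 p by rewrite /p norm2_proj // unit_cols expr1n.
    have -> : 2 * (nd * l1obj D ch) = 2 * nd / norm2 p * (norm2 p * l1obj D ch).
      by rewrite [RHS]mulrA mulfVK ?gt_eqF // mulrA.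
    by rewrite ler_wpM2l ?divr_ge0 ?mulr_ge0 ?norm2_ge0.
  lra.
apply: (argmin_eq_sharp (g := fun y => norm2 (U^T *m y)) _ _ kappa_gt0 _ _
  (l1obj_growth U_orth inliers_in unit_cols ch_opt)).
- by move=> y [].
- by split; [exact: ch_opt.1.1 | rewrite dotvC ch_opt.1.2].
- by move=> y; exact: norm2_ge0.
- by move=> y dy1 /norm2_eq0.
Qed.
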